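(* Let $K_1,\dots,K_n\colon\mathbb{E}(D)\to\mathbb{E}(D)$ be affine functions. Then $$\mu X.\,\min\{K_1(X),\dots,K_n(X)\}\;=\;\inf_{\substack{t_1,\dots,t_n\colon D\to[0,1]\\ t_1+\dots+t_n=\mathbb{1}}}\ \mu X.\,\sum_{i=1}^n t_i\cdot K_i(X).$$
   Context: $\mathbb{E}(D)$ is the set of functions $D\to[0,\infty]$ with pointwise order and operations ($\infty+x=\infty$, $0\cdot\infty=0$, $r\cdot\infty=\infty$ for $r>0$); $\min$ and the products $t_i\cdot K_i(X)$ are taken pointwise; $\mathbb{1}$ is the constant function $1$. $K$ is affine if $K(\alpha\eta_1+(1-\alpha)\eta_2)=\alpha K(\eta_1)+(1-\alpha)K(\eta_2)$ for all $\eta_1,\eta_2$ and $\alpha\in[0,1]$. $\mu X.\,G(X)$ denotes the least fixed point of a monotone $G$ on the complete lattice $\mathbb{E}(D)$. *)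

(* E(D) = functions D -> [0,+oo], modelled as
   functions D -> \bar R that are pointwise nonnegative. *)
From HB Require Import structures.
From mathcomp Require Import all_boot all_order all_algebra.
From mathcomp Require Import all_classical all_reals ereal.
Set Implicit Arguments. Unset Strict Implicit. Unset Printing Implicit Defensive.
Import Order.TTheory GRing.Theory Num.Theory.
Local Open Scope classical_set_scope.
Local Open Scope ring_scope.
Local Open Scope ereal_scope.

Definition nonnegf (R : realType) (D : Type) (f : D -> \bar R) : Prop :=
  forall d, 0 <= f d.

Definition maps_E (R : realType) (D : Type) (K : (D -> \bar R) -> (D -> \bar R)) : Prop :=
  forall eta, nonnegf eta -> nonnegf (K eta).

(* K is affine on E(D) (pointwise operations, 0 * +oo = 0) *)
Definition affineE (R : realType) (D : Type) (K : (D -> \bar R) -> (D -> \bar R)) : Prop :=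
  forall (eta1 eta2 : D -> \bar R) (a : R), nonnegf eta1 -> nonnegf eta2 ->
    (0 <= a <= 1)%R ->
    K (fun d => a%:E * eta1 d + (1 - a)%:E * eta2 d)
    = (fun d => a%:E * K eta1 d + (1 - a)%:E * K eta2 d).

(* Pointwise infimum of a set of elements of E(D) (the meet in the complete
   lattice E(D); the infimum of the empty set is the constant +oo). *)
Definition infE (R : realType) (D : Type) (S : set (D -> \bar R)) : D -> \bar R :=
  fun d => ereal_inf [set X d | X in S].

(* Least fixed point mu X. G(X) on E(D), via Knaster--Tarski: the meet of all
   prefixed points of G in E(D).  For monotone G this is the least fixed point. *)
Definition lfpE (R : realType) (D : Type) (G : (D -> \bar R) -> (D -> \bar R)) : D -> \bar R :=
  infE [set X | nonnegf X /\ (forall d, G X d <= X d)].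

(* Both sides are meets of prefixed points, so it suffices to compare prefixed
   points.  Since a minimum lies below every convex combination, a prefixed
   point of each weighted functional [sum_i t_i K_i] is one of [min_i K_i],
   which gives [<=].  Conversely, if [Y] is a prefixed point of [min_i K_i],
   choosing at each [d] an index attaining the minimum and putting all weight
   on it yields [t] for which [Y] is a prefixed point of [sum_i t_i K_i]. *)
From HB Require Import structures.
From mathcomp Require Import all_boot all_order all_algebra.
From mathcomp Require Import all_classical all_reals ereal.
Set Implicit Arguments.
Unset Strict Implicit.
Unset Printing Implicit Defensive.
Import Order.TTheory GRing.Theory Num.Theory.
Local Open Scope classical_set_scope.
Local Open Scope ring_scope.
Local Open Scope ereal_scope.

Section LeastPrefixedPoint.
Variables (R : realType) (D : Type).
Implicit Types (G H : (D -> \bar R) -> (D -> \bar R)) (Y : D -> \bar R).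

Lemma lfpE_le_prefixed G Y :
  nonnegf Y -> (forall d, G Y d <= Y d) -> forall d, lfpE G d <= Y d.
Proof. by move=> Y0 GY d; apply: ereal_inf_lbound; exists Y. Qed.

Lemma le_lfpE G H :
  (forall X, nonnegf X -> forall d, G X d <= H X d) ->
  forall d, lfpE G d <= lfpE H d.
Proof.
move=> GH d; apply: le_ereal_inf_tmp => _ [Y [Y0 HY] <-].
by apply: lfpE_le_prefixed => // d'; apply: le_trans (GH _ Y0 d') (HY d').
Qed.

End LeastPrefixedPoint.

Section MinimumAndConvexCombinations.
Variables (R : realType) (I : finType).

Lemma bigmine_le_convex (t : I -> R) (a : I -> \bar R) :
  (forall i, 0 <= a i) -> (forall i, (0 <= t i)%R) -> (\sum_i t i)%R = 1%R ->
  \big[mine/+oo]_i a i <= \sum_i (t i)%:E * a i.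
Proof.
move=> a0 t0 t1; set m := \big[mine/+oo]_i a i.
have -> : m = (\sum_i t i)%:E * m by rewrite t1 mul1e.
rewrite -sumEFin ge0_sume_distrl; last by move=> i _; rewrite lee_fin.
apply: lee_sum => i _; apply: lee_wpmul2l; first by rewrite lee_fin.
exact: bigmin_le.
Qed.

Lemma convex_attains_bigmine (i0 : I) (D : Type) (a : I -> D -> \bar R) :
  exists t : I -> D -> R,
    [/\ forall i d, (0 <= t i d <= 1)%R, forall d, (\sum_i t i d)%R = 1%R
      & forall d, \sum_i (t i d)%:E * a i d = \big[mine/+oo]_i a i d].
Proof.
have /choice [j aj] : forall d, exists j, \big[mine/+oo]_i a i d = a j d.
  move=> d; have [j _ ->] := eq_bigmin i0 xpredT (a^~ d) isT (fun i _ => leey _).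
  by exists j.
exists (fun i d => (i == j d)%:R); split => [i d | d | d].
- by case: (i == j d); rewrite ?lexx ?ler01.
- by rewrite (bigD1 (j d)) //= eqxx big1 ?addr0 // => i /negbTE ->.
- rewrite aj (bigD1 (j d)) //= eqxx mul1e big1 ?adde0 //.
  by move=> i /negbTE ->; rewrite mul0e.
Qed.

End MinimumAndConvexCombinations.

Theorem propositionE3 (R : realType) (D : Type) (n : nat)
  (K : 'I_n -> (D -> \bar R) -> (D -> \bar R))
  (HKE : forall i, maps_E (K i))
  (HKaff : forall i, affineE (K i)) :
  lfpE (fun X d => \big[mine/+oo]_(i < n) K i X d)
  = infE [set lfpE (fun X d => \sum_(i < n) (t i d)%:E * K i X d)
         | t in [set t : 'I_n -> D -> R |
                  (forall i d, (0 <= t i d <= 1)%R) /\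
                  (forall d, (\sum_(i < n) t i d)%R = 1%R)]].
Proof.
clear HKaff; apply/funext => d; apply/eqP; rewrite eq_le; apply/andP; split.
- apply: le_ereal_inf_tmp => _ [_ [t [t01 t1] <-] <-].
  apply: le_lfpE => X X0 d'; apply: bigmine_le_convex => [i|i|//].
  + exact: HKE.
  + by case/andP: (t01 i d').
- apply: le_ereal_inf_tmp => _ [Y [Y0 HY] <-].
  case: n K HKE HY => [|m] K _ HY.
    by have := HY d; rewrite big_ord0 leye_eq => /eqP ->; apply: leey.
  have [t [t01 t1 tK]] := convex_attains_bigmine ord0 (fun i d => K i Y d).
  apply: le_trans (ereal_inf_lbound _) (lfpE_le_prefixed Y0 _ d).
    by exists (lfpE (fun X d => \sum_(i < m.+1) (t i d)%:E * K i X d)) => //; exists t.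
  by move=> d'; rewrite [leLHS]tK.
Qed.
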